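(* Let $n\ge 1$ be an integer, $\kappa\in\mathbb{R}$, $T>0$ and $0<|\phi|<1/2$ satisfy $$\coth\big((\tfrac12-\phi)T\big)=\kappa-\coth\big((\tfrac12+\phi)T\big),$$ and set $\tau=nT$. Define $$\gamma_1=\frac{\coth^2(\tau-(n-\tfrac12+\phi)T)-1}{[\kappa-\coth(\tau-(n-\tfrac12+\phi)T)]^2-1},\qquad \gamma_2=\frac{\coth^2(\tau-(n-\tfrac12-\phi)T)-1}{[\kappa-\coth(\tau-(n-\tfrac12-\phi)T)]^2-1}.$$ Then $\gamma_1\gamma_2=1$, $\beta:=\gamma_1+\gamma_2>2$, and $\widehat D_a(\lambda)=\lambda^{2n-1}(\lambda-\gamma_1)(\lambda-\gamma_2)-(1-\gamma_1)(1-\gamma_2)$ factors as $(\lambda-1)\widehat H_a(\lambda)$ with $$\widehat H_a(\lambda)=\lambda^{2n}+(1-\beta)\lambda^{2n-1}+(2-\beta)\sum_{i=0}^{2n-2}\lambda^i;$$ in particular $\widehat D_a$ has a real root strictly greater than $1$. *)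

From Stdlib Require Import Reals.
Open Scope R_scope.

Definition coth (x : R) : R := cosh x / sinh x.

Definition Dhat (n : nat) (g1 g2 lam : R) : R :=
  lam ^ (2 * n - 1) * (lam - g1) * (lam - g2) - (1 - g1) * (1 - g2).

Definition Hhat (n : nat) (beta lam : R) : R :=
  lam ^ (2 * n) + (1 - beta) * lam ^ (2 * n - 1)
  + (2 - beta) * sum_f_R0 (fun i => lam ^ i) (2 * n - 2).

From Stdlib Require Import Reals Lra Lia Psatz.
Open Scope R_scope.

(* With a = (1/2 - phi) T and b = (1/2 + phi) T the arguments of coth in
   gamma_1 and gamma_2 are a and b.  As coth^2 x - 1 = 1 / sinh^2 x and the
   hypothesis reads kappa - coth a = coth b, gamma_1 = (sinh b / sinh a)^2 and
   gamma_2 = 1 / gamma_1; phi <> 0 makes gamma_1 <> 1, so beta > 2 by AM-GM.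
   Once gamma_1 gamma_2 = 1 the factorization is the geometric-sum identity,
   and H_a changes sign on [1, beta]: H_a(1) = 2n (2 - beta) < 0, whereas
   D_a(beta) = beta^(2n-1) + beta - 2 > 0 forces H_a(beta) > 0. *)

Lemma cosh_sqr_sub_sinh_sqr (x : R) : cosh x ^ 2 - sinh x ^ 2 = 1.
Proof.
  unfold cosh, sinh; rewrite exp_Ropp.
  assert (exp x <> 0) by apply Rgt_not_eq, exp_pos.
  field; assumption.
Qed.

Lemma sinh_pos (x : R) : 0 < x -> 0 < sinh x.
Proof. intro hx; rewrite <- sinh_0; now apply sinh_lt. Qed.

Lemma sinh_inj (x y : R) : sinh x = sinh y -> x = y.
Proof. intro h; now rewrite <- (arcsinh_sinh x), h, arcsinh_sinh. Qed.

Lemma coth_sqr_sub1 (x : R) : 0 < x -> coth x ^ 2 - 1 = / sinh x ^ 2.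
Proof.
  intro hx; pose proof (sinh_pos x hx); unfold coth.
  replace (/ sinh x ^ 2) with ((cosh x ^ 2 - sinh x ^ 2) / sinh x ^ 2)
    by (rewrite cosh_sqr_sub_sinh_sqr; field; lra).
  field; lra.
Qed.

Lemma coth_gamma (kappa a b : R) : 0 < a -> 0 < b -> coth a = kappa - coth b ->
  (coth a ^ 2 - 1) / ((kappa - coth a) ^ 2 - 1) = (sinh b / sinh a) ^ 2.
Proof.
  intros ha hb heq.
  replace (kappa - coth a) with (coth b) by lra.
  pose proof (sinh_pos a ha); pose proof (sinh_pos b hb).
  rewrite !coth_sqr_sub1 by assumption; field; lra.
Qed.

Lemma add_inv_gt2 (x : R) : 0 < x -> x <> 1 -> x + / x > 2.
Proof.
  intros hx hx1.
  assert (x + / x - 2 = (x - 1) ^ 2 / x) by (field; lra).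
  assert (0 < (x - 1) ^ 2) by (assert (x - 1 <> 0) by lra; nra).
  assert (0 < (x - 1) ^ 2 / x) by (apply Rdiv_lt_0_compat; lra).
  lra.
Qed.

Lemma coth_gamma_pair (kappa a b : R) : 0 < a -> 0 < b -> a <> b ->
  coth a = kappa - coth b ->
  let g1 := (coth a ^ 2 - 1) / ((kappa - coth a) ^ 2 - 1) in
  let g2 := (coth b ^ 2 - 1) / ((kappa - coth b) ^ 2 - 1) in
  g1 * g2 = 1 /\ 2 < g1 + g2.
Proof.
  intros ha hb hab heq g1 g2.
  pose proof (sinh_pos a ha); pose proof (sinh_pos b hb).
  set (u := sinh b / sinh a).
  assert (hu : 0 < u) by (apply Rdiv_lt_0_compat; assumption).
  assert (hu1 : u <> 1).
  { intro hu1; apply hab, sinh_inj.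
    replace (sinh b) with (u * sinh a) by (unfold u; field; lra).
    rewrite hu1; ring. }
  assert (hg1 : g1 = u ^ 2) by now apply coth_gamma.
  assert (hg2 : g2 = / u ^ 2).
  { unfold g2; rewrite (coth_gamma kappa b a) by (auto; lra); unfold u; field; lra. }
  rewrite hg1, hg2; split.
  - field; lra.
  - apply add_inv_gt2; [nra | intro; nra].
Qed.

Lemma Dhat_factor (n : nat) (g1 g2 lam : R) : (1 <= n)%nat -> g1 * g2 = 1 ->
  Dhat n g1 g2 lam = (lam - 1) * Hhat n (g1 + g2) lam.
Proof.
  intros hn hg; unfold Dhat, Hhat.
  set (m := (2 * n - 2)%nat).
  replace (2 * n - 1)%nat with (S m) by lia.
  replace (2 * n)%nat with (S (S m)) by lia.
  pose proof (GP_finite lam m) as geom; rewrite Nat.add_1_r in geom.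
  replace ((1 - g1) * (1 - g2)) with (2 - (g1 + g2)) by nra.
  rewrite Rmult_assoc.
  replace ((lam - g1) * (lam - g2)) with (lam * lam - (g1 + g2) * lam + 1)
    by (rewrite <- hg; ring).
  rewrite !Rmult_plus_distr_l.
  replace ((lam - 1) * ((2 - (g1 + g2)) * sum_f_R0 (fun i => lam ^ i) m))
    with ((2 - (g1 + g2)) * (sum_f_R0 (fun i => lam ^ i) m * (lam - 1))) by ring.
  rewrite geom; simpl; ring.
Qed.

Lemma Hhat_at_1 (n : nat) (beta : R) : 2 < beta -> Hhat n beta 1 < 0.
Proof.
  intro hbeta; unfold Hhat; rewrite !pow1.
  rewrite (sum_eq _ (fun _ => 1)) by (intros; apply pow1).
  rewrite sum_cte.
  pose proof (pos_INR (S (2 * n - 2))); nra.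
Qed.

Lemma Hhat_continuous (n : nat) (beta : R) : continuity (Hhat n beta).
Proof.
  intro x; unfold Hhat.
  assert (hsum : continuity (fun lam => sum_f_R0 (fun i => lam ^ i) (2 * n - 2))).
  { intro y; apply (continuity_pt_locally_ext
      (fun lam => sum_f_R0 (fun i => 1 * lam ^ i) (2 * n - 2)) _ 1 y Rlt_0_1);
      [intros; apply sum_eq; intros; ring | apply (continuity_finite_sum (fun _ => 1))]. }
  repeat apply continuity_pt_plus;
    try apply continuity_pt_scal; auto; apply derivable_continuous_pt, derivable_pt_pow.
Qed.

Lemma Dhat_at_sum_pos (n : nat) (g1 g2 : R) : g1 * g2 = 1 -> 2 < g1 + g2 ->
  0 < Dhat n g1 g2 (g1 + g2).
Proof.
  intros hg hbeta; unfold Dhat.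
  rewrite Rmult_assoc.
  replace ((g1 + g2 - g1) * (g1 + g2 - g2)) with 1 by lra.
  replace ((1 - g1) * (1 - g2)) with (2 - (g1 + g2)) by nra.
  pose proof (pow_lt (g1 + g2) (2 * n - 1) ltac:(lra)); lra.
Qed.

Lemma Dhat_root_gt1 (n : nat) (g1 g2 : R) : (1 <= n)%nat ->
  g1 * g2 = 1 -> 2 < g1 + g2 -> exists lam, lam > 1 /\ Dhat n g1 g2 lam = 0.
Proof.
  intros hn hg hbeta.
  assert (hH1 := Hhat_at_1 n (g1 + g2) hbeta).
  assert (hHbeta : 0 < Hhat n (g1 + g2) (g1 + g2)).
  { pose proof (Dhat_at_sum_pos n g1 g2 hg hbeta) as hD.
    rewrite Dhat_factor in hD by assumption; nra. }
  destruct (IVT _ 1 (g1 + g2) (Hhat_continuous n (g1 + g2)) ltac:(lra) hH1 hHbeta)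
    as [lam [[hlam1 hlam2] hroot]].
  exists lam; split.
  - assert (lam <> 1) by (intro; subst; lra); lra.
  - rewrite Dhat_factor, hroot by assumption; ring.
Qed.

Theorem mainTheorem12 (n : nat) (kappa T phi : R)
  (hn : (1 <= n)%nat) (hT : 0 < T)
  (hphi0 : 0 < Rabs phi) (hphi1 : Rabs phi < / 2)
  (heq : coth ((/ 2 - phi) * T) = kappa - coth ((/ 2 + phi) * T)) :
  let tau := INR n * T in
  let g1 := (coth (tau - (INR n - / 2 + phi) * T) ^ 2 - 1)
            / ((kappa - coth (tau - (INR n - / 2 + phi) * T)) ^ 2 - 1) in
  let g2 := (coth (tau - (INR n - / 2 - phi) * T) ^ 2 - 1)
            / ((kappa - coth (tau - (INR n - / 2 - phi) * T)) ^ 2 - 1) in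
  let beta := g1 + g2 in
  g1 * g2 = 1 /\ beta > 2 /\
  (forall lam : R, Dhat n g1 g2 lam = (lam - 1) * Hhat n beta lam) /\
  (exists lam : R, lam > 1 /\ Dhat n g1 g2 lam = 0).
Proof.
  intros tau g1 g2 beta.
  set (a := (/ 2 - phi) * T) in *; set (b := (/ 2 + phi) * T) in *.
  pose proof (Rle_abs phi); pose proof (Rle_abs (- phi)); rewrite Rabs_Ropp in *.
  assert (ha : 0 < a) by (apply Rmult_lt_0_compat; lra).
  assert (hb : 0 < b) by (apply Rmult_lt_0_compat; lra).
  assert (hab : a <> b).
  { intro hab; unfold a, b in hab; assert (phi = 0) by nra.
    subst; rewrite Rabs_R0 in hphi0; lra. }
  assert (hgamma : g1 * g2 = 1 /\ 2 < g1 + g2).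
  { unfold g1, g2.
    replace (tau - (INR n - / 2 + phi) * T) with a by (unfold tau, a; ring).
    replace (tau - (INR n - / 2 - phi) * T) with b by (unfold tau, b; ring).
    now apply coth_gamma_pair. }
  destruct hgamma as [hprod hbeta].
  split; [exact hprod | split; [exact hbeta | split]].
  - intro lam; now apply Dhat_factor.
  - now apply Dhat_root_gt1.
Qed.
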